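(* The convex Vietoris functor $\mathbb{V}^{\mathrm{c}}\colon\mathbf{CompOrd}\to\mathbf{CompOrd}$ preserves regular monomorphisms; equivalently, if $f\colon X\to Y$ is an order-reflecting morphism of compact ordered spaces (i.e. $f(x)\le f(y)$ implies $x\le y$), then $\mathbb{V}^{\mathrm{c}}f$ is order-reflecting with respect to the Egli–Milner orders.
   Context: $\mathbf{CompOrd}$ is the category of compact ordered spaces (compact Hausdorff spaces with a partial order closed in $X\times X$) and continuous order-preserving maps; its regular monomorphisms are exactly the order-reflecting morphisms. For a subset $Y$ of a poset, $\uparrow Y$, $\downarrow Y$ are up- and down-closure; $Y$ is convex if $y_1\le x\le y_2$ with $y_1,y_2\in Y$ implies $x\in Y$; $\updownarrow Y=\uparrow Y\cap\downarrow Y$. $\mathbb{V}^{\mathrm{c}}X$ is the set of closed convex subsets of $X$ with the topology generated by $\Diamond U=\{K\mid K\cap U\neq\varnothing\}$ and $\Box U=\{K\mid K\subseteq U\}$ ($U$ open upset or open downset of $X$) and the Egli–Milner order $K\le_{\mathrm{EM}}L$ iff $\uparrow L\subseteq\uparrow K$ and $\downarrow K\subseteq\downarrow L$; $\mathbb{V}^{\mathrm{c}}f(K)=\updownarrow f[K]$. *)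

From mathcomp Require Import all_boot.
From mathcomp Require Import boolp classical_sets topology.
Set Implicit Arguments. Unset Strict Implicit. Unset Printing Implicit Defensive.
Local Open Scope classical_set_scope.

Definition compact_ordered_space (X : topologicalType) (le : X -> X -> Prop) :=
  hausdorff_space X /\ compact [set: X] /\
  (forall x, le x x) /\
  (forall x y, le x y -> le y x -> x = y) /\
  (forall x y z, le x y -> le y z -> le x z) /\
  closed [set p : X * X | le p.1 p.2].

Definition compord_morphism (X Y : topologicalType)
  (leX : X -> X -> Prop) (leY : Y -> Y -> Prop) (f : X -> Y) :=
  continuous f /\ (forall x y, leX x y -> leY (f x) (f y)).

Definition order_reflecting (X Y : Type)
  (leX : X -> X -> Prop) (leY : Y -> Y -> Prop) (f : X -> Y) :=
  forall x y, leY (f x) (f y) -> leX x y.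

Definition upc (X : Type) (le : X -> X -> Prop) (A : set X) : set X :=
  [set x | exists2 a, A a & le a x].
Definition downc (X : Type) (le : X -> X -> Prop) (A : set X) : set X :=
  [set x | exists2 a, A a & le x a].
Definition updownc (X : Type) (le : X -> X -> Prop) (A : set X) : set X :=
  upc le A `&` downc le A.

Definition convex_set (X : Type) (le : X -> X -> Prop) (A : set X) :=
  forall y1 x y2, A y1 -> A y2 -> le y1 x -> le x y2 -> A x.

(* Elements of V^c X: closed convex subsets. *)
Definition closed_convex (X : topologicalType) (le : X -> X -> Prop) (K : set X) :=
  closed K /\ convex_set le K.

Definition egli_milner (X : Type) (le : X -> X -> Prop) (K L : set X) :=
  upc le L `<=` upc le K /\ downc le K `<=` downc le L.

Definition Vc_map (X Y : Type) (leY : Y -> Y -> Prop) (f : X -> Y) (K : set X)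
  : set Y := updownc leY (f @` K).

From mathcomp Require Import all_boot.
From mathcomp Require Import boolp classical_sets topology.
Local Open Scope classical_set_scope.

(* For a preorder, the up-closure of the convex hull of a set A is
   the up-closure of A itself (A sits inside its convex hull, and every
   point of the hull lies above a point of A); dually for down-closures.
   Hence the hypothesis  ↑(V f L) ⊆ ↑(V f K)  says that every f l lies above
   some f k, and order reflection turns this into l lying above k, which
   gives  ↑L ⊆ ↑K  by transitivity.  The down-closure half is dual. *)

Section ConvexHullClosures.
Variables (T : Type) (le : T -> T -> Prop).

Lemma sub_updownc (A : set T) :
  (forall x, le x x) -> A `<=` updownc le A.
Proof. by move=> le_refl a Aa; split; exists a. Qed.

Lemma upc_updownc (A : set T) :
  (forall x y z, le x y -> le y z -> le x z) ->
  upc le (updownc le A) `<=` upc le A.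
Proof.
by move=> le_trans x [b [[a Aa ab] _] bx]; exists a => //; exact: le_trans bx.
Qed.

Lemma downc_updownc (A : set T) :
  (forall x y z, le x y -> le y z -> le x z) ->
  downc le (updownc le A) `<=` downc le A.
Proof.
by move=> le_trans x [b [_ [a Aa ba]] xb]; exists a => //; exact: le_trans ba.
Qed.

End ConvexHullClosures.

Arguments sub_updownc {T le A}.
Arguments upc_updownc {T le A}.
Arguments downc_updownc {T le A}.

Section ReflectingClosures.
Variables (X Y : Type) (leX : X -> X -> Prop) (leY : Y -> Y -> Prop).
Variable f : X -> Y.
Hypothesis f_reflecting : order_reflecting leX leY f.
Hypothesis leX_trans : forall x y z, leX x y -> leX y z -> leX x z.

Lemma upc_reflect (A B : set X) :
  f @` A `<=` upc leY (f @` B) -> upc leX A `<=` upc leX B.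
Proof.
move=> AB x [a Aa ax].
have [_ [b Bb <-] fb_fa] := AB _ (imageP f Aa).
by exists b => //; apply: leX_trans ax; exact: f_reflecting.
Qed.

Lemma downc_reflect (A B : set X) :
  f @` A `<=` downc leY (f @` B) -> downc leX A `<=` downc leX B.
Proof.
move=> AB x [a Aa xa].
have [_ [b Bb <-] fa_fb] := AB _ (imageP f Aa).
by exists b => //; apply: leX_trans xa _; exact: f_reflecting.
Qed.

End ReflectingClosures.

Arguments upc_reflect {X Y leX leY f} _ _ {A B}.
Arguments downc_reflect {X Y leX leY f} _ _ {A B}.

Theorem lemma3p18 (X Y : topologicalType)
  (leX : X -> X -> Prop) (leY : Y -> Y -> Prop) (f : X -> Y) :
  compact_ordered_space leX -> compact_ordered_space leY ->
  compord_morphism leX leY f ->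
  order_reflecting leX leY f ->
  forall K L : set X, closed_convex leX K -> closed_convex leX L ->
    egli_milner leY (Vc_map leY f K) (Vc_map leY f L) ->
    egli_milner leX K L.
Proof.
move=> [_ [_ [_ [_ [leX_trans _]]]]] [_ [_ [leY_refl [_ [leY_trans _]]]]] _
  f_refl K L _ _ [upLK downKL].
split.
- apply: (upc_reflect f_refl leX_trans) => y fLy.
  apply: (upc_updownc leY_trans); apply: upLK.
  by exists y => //; exact: (sub_updownc leY_refl).
- apply: (downc_reflect f_refl leX_trans) => y fKy.
  apply: (downc_updownc leY_trans); apply: downKL.
  by exists y => //; exact: (sub_updownc leY_refl).
Qed.
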